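(* Let \(a,b,c\) be positive integers, \(m\) a positive integer that is not a perfect square, with \(\gcd(am,b^2-c^2m)=1\), and let \(A,B\in\mathbb Z\). Then there is a unique \((\bar x,\bar y,\bar z,\bar w)\in\mathbb Z^4\) with \(0\leq\bar z<am\) and \(0\leq\bar w<a\) satisfying \(a\sqrt m(\bar x+\bar y\sqrt m)+(b+c\sqrt m)(\bar z+\bar w\sqrt m)=A+B\sqrt m\). *)

From Stdlib Require Export Reals ZArith.
Open Scope R_scope.

Definition is_square (m : Z) : Prop := exists k : Z, (k * k)%Z = m.

Definition rep_eq (a b c m A B x y z w : Z) : Prop :=
  IZR a * sqrt (IZR m) * (IZR x + IZR y * sqrt (IZR m))
  + (IZR b + IZR c * sqrt (IZR m)) * (IZR z + IZR w * sqrt (IZR m))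
  = IZR A + IZR B * sqrt (IZR m).

(* Since sqrt m is irrational, the real identity is equivalent to the two
   integer equations a m y + b z + c m w = A and a x + b w + c z = B.  With
   D = b^2 - c^2 m, eliminating x and y shows that z is determined modulo a m
   and w modulo a (multiply by D, which is invertible modulo a m), while
   (x, y, z, w) |-> (x + b k + c m l, y + c k + b l, z - a m l, w - a k)
   preserves solutions; a Bezout relation u a m + v D = 1 gives one solution. *)

From Stdlib Require Import Reals ZArith Lia Lra Znumtheory.
Open Scope R_scope.

Lemma mul_sq_eq_sq_is_square (m P Q : Z) :
  (m * (Q * Q) = P * P)%Z -> Q <> 0%Z -> is_square m.
Proof.
  intros E HQ.
  pose proof (Z.gcd_nonneg P Q). pose proof (Z.gcd_eq_0_r P Q).
  destruct (Z.gcd_divide_l P Q) as [P' HP]; destruct (Z.gcd_divide_r P Q) as [Q' HQ'].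
  pose proof (Z.gcd_mul_mono_r P' Q' (Z.gcd P Q)) as Hm.
  rewrite <- HP, <- HQ' in Hm.
  remember (Z.gcd P Q) as g eqn:Hg_def.
  assert (Hg : (0 < g)%Z) by lia.
  assert (Hcop : Z.gcd P' Q' = 1%Z).
  { rewrite Z.abs_eq in Hm by lia. nia. }
  assert (E' : (m * (Q' * Q') = P' * P')%Z).
  { apply (Z.mul_cancel_r _ _ (g * g)); [nia|]. subst P Q. lia. }
  assert (Hdiv : (Q' | P')%Z).
  { apply (Z.gauss _ P'); [exists (m * Q')%Z; lia | now rewrite Z.gcd_comm]. }
  assert (Hunit : (Q' | 1)%Z).
  { rewrite <- Hcop. apply Z.gcd_greatest; [exact Hdiv | apply Z.divide_refl]. }
  exists P'. destruct (Z.divide_1_r Q' Hunit); subst Q'; lia.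
Qed.

Lemma sqrt_nonsquare_coords_eq0 (m P Q : Z) :
  (0 <= m)%Z -> ~ is_square m ->
  IZR P + IZR Q * sqrt (IZR m) = 0 -> P = 0%Z /\ Q = 0%Z.
Proof.
  intros hm hsq E.
  assert (Hs : sqrt (IZR m) * sqrt (IZR m) = IZR m) by (apply sqrt_sqrt, IZR_le, hm).
  assert (HQ : Q = 0%Z).
  { destruct (Z.eq_dec Q 0) as [|HQ]; [assumption|].
    exfalso; apply hsq, (mul_sq_eq_sq_is_square m P Q); [|exact HQ].
    apply eq_IZR; rewrite !mult_IZR, <- Hs.
    replace (IZR P) with (- (IZR Q * sqrt (IZR m))) by lra. ring. }
  subst Q; split; [|reflexivity].
  apply eq_IZR; lra.
Qed.

Definition rep_coords (a b c m A B x y z w : Z) : Prop :=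
  (a * m * y + b * z + c * m * w = A /\ a * x + b * w + c * z = B)%Z.

Lemma rep_eqE (a b c m A B x y z w : Z) :
  (0 <= m)%Z -> ~ is_square m ->
  rep_eq a b c m A B x y z w <-> rep_coords a b c m A B x y z w.
Proof.
  intros hm hsq.
  assert (Hs : sqrt (IZR m) * sqrt (IZR m) = IZR m) by (apply sqrt_sqrt, IZR_le, hm).
  assert (Hexp : IZR a * sqrt (IZR m) * (IZR x + IZR y * sqrt (IZR m))
    + (IZR b + IZR c * sqrt (IZR m)) * (IZR z + IZR w * sqrt (IZR m))
    = IZR (a * m * y + b * z + c * m * w) + IZR (a * x + b * w + c * z) * sqrt (IZR m)).
  { rewrite !plus_IZR, !mult_IZR. set (s := sqrt (IZR m)) in *. rewrite <- Hs. ring. }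
  unfold rep_eq, rep_coords; rewrite Hexp; split.
  - intro E.
    destruct (sqrt_nonsquare_coords_eq0 m (a * m * y + b * z + c * m * w - A)
                (a * x + b * w + c * z - B) hm hsq) as [H1 H2]; [|lia].
    rewrite !minus_IZR; lra.
  - intros [-> ->]; reflexivity.
Qed.

Lemma rep_coords_shift (a b c m A B x y z w k l : Z) :
  rep_coords a b c m A B x y z w ->
  rep_coords a b c m A B (x + b * k + c * m * l) (y + c * k + b * l)
    (z - a * m * l) (w - a * k).
Proof. unfold rep_coords; intros [<- <-]; split; ring. Qed.

Lemma eq_of_divide_sub (n z z' : Z) :
  (n | z' - z)%Z -> (0 <= z < n)%Z -> (0 <= z' < n)%Z -> z' = z.
Proof.
  intros [k Hk] Hz Hz'.
  destruct (Z.lt_trichotomy k 0) as [Hk0 | [-> | Hk0]]; nia.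
Qed.

Section Residues.

Variables a b c m : Z.
Hypotheses (ha : (0 < a)%Z) (hm : (0 < m)%Z)
  (hgcd : Z.gcd (a * m) (b ^ 2 - c ^ 2 * m) = 1%Z).

Lemma rep_coords_exists (A B : Z) :
  exists x y z w, rep_coords a b c m A B x y z w.
Proof.
  destruct (Z.gcd_bezout _ _ _ hgcd) as [u [v Huv]].
  exists (u * m * B)%Z, (u * A)%Z, (v * (b * A - c * m * B))%Z, (v * (b * B - c * A))%Z.
  split.
  - transitivity (A * (u * (a * m) + v * (b ^ 2 - c ^ 2 * m)))%Z; [ring|].
    rewrite Huv; ring.
  - transitivity (B * (u * (a * m) + v * (b ^ 2 - c ^ 2 * m)))%Z; [ring|].
    rewrite Huv; ring.
Qed.

Lemma rep_coords_exists_reduced (A B : Z) :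
  exists x y z w, (0 <= z < a * m)%Z /\ (0 <= w < a)%Z /\
    rep_coords a b c m A B x y z w.
Proof.
  destruct (rep_coords_exists A B) as (x & y & z & w & H).
  pose proof (Z.div_mod z (a * m) ltac:(lia)).
  pose proof (Z.div_mod w a ltac:(lia)).
  eexists _, _, _, _; split; [|split];
    [| | exact (rep_coords_shift _ _ _ _ _ _ _ _ _ _ (w / a) (z / (a * m)) H)].
  - replace (z - a * m * (z / (a * m)))%Z with (z mod (a * m))%Z by lia.
    apply Z.mod_pos_bound; lia.
  - replace (w - a * (w / a))%Z with (w mod a)%Z by lia.
    apply Z.mod_pos_bound; lia.
Qed.

Lemma rep_coords_unique (A B x y z w x' y' z' w' : Z) :
  rep_coords a b c m A B x y z w -> rep_coords a b c m A B x' y' z' w' ->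
  (0 <= z < a * m)%Z -> (0 <= w < a)%Z ->
  (0 <= z' < a * m)%Z -> (0 <= w' < a)%Z ->
  x' = x /\ y' = y /\ z' = z /\ w' = w.
Proof.
  unfold rep_coords; intros [E1 E2] [E1' E2'] Hz Hw Hz' Hw'.
  assert (Hga : Z.gcd a (b ^ 2 - c ^ 2 * m) = 1%Z).
  { apply Zgcd_1_rel_prime, (rel_prime_div _ _ _ (proj1 (Zgcd_1_rel_prime _ _) hgcd)).
    exists m; ring. }
  assert (Dz : (a * m | (b ^ 2 - c ^ 2 * m) * (z' - z))%Z).
  { exists (c * (x' - x) - b * (y' - y))%Z.
    transitivity (b * ((a * m * y' + b * z' + c * m * w') - (a * m * y + b * z + c * m * w))
      - c * m * ((a * x' + b * w' + c * z') - (a * x + b * w + c * z))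
      + (c * (x' - x) - b * (y' - y)) * (a * m))%Z; [ring|].
    rewrite E1, E2, E1', E2'; ring. }
  assert (Dw : (a | (b ^ 2 - c ^ 2 * m) * (w' - w))%Z).
  { exists (c * m * (y' - y) - b * (x' - x))%Z.
    transitivity (b * ((a * x' + b * w' + c * z') - (a * x + b * w + c * z))
      - c * ((a * m * y' + b * z' + c * m * w') - (a * m * y + b * z + c * m * w))
      + (c * m * (y' - y) - b * (x' - x)) * a)%Z; [ring|].
    rewrite E1, E2, E1', E2'; ring. }
  assert (z' = z) by exact (eq_of_divide_sub _ _ _ (Z.gauss _ _ _ Dz hgcd) Hz Hz').
  assert (w' = w) by exact (eq_of_divide_sub _ _ _ (Z.gauss _ _ _ Dw Hga) Hw Hw').
  subst z' w'; split; nia.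
Qed.

End Residues.

Theorem corollary2 (a b c m A B : Z)
  (ha : (0 < a)%Z) (hb : (0 < b)%Z) (hc : (0 < c)%Z) (hm : (0 < m)%Z)
  (hsq : ~ is_square m)
  (hgcd : Z.gcd (a * m) (b ^ 2 - c ^ 2 * m) = 1%Z) :
  exists! t : Z * Z * Z * Z,
    let '(x, y, z, w) := t in
    (0 <= z < a * m)%Z /\ (0 <= w < a)%Z /\ rep_eq a b c m A B x y z w.
Proof.
  assert (hm0 : (0 <= m)%Z) by lia.
  destruct (rep_coords_exists_reduced a b c m ha hm hgcd A B)
    as (x & y & z & w & Hz & Hw & H).
  exists (x, y, z, w); split.
  - repeat split; try lia. now apply rep_eqE.
  - intros [[[x' y'] z'] w'] (Hz' & Hw' & H').
    apply rep_eqE in H'; [|exact hm0|exact hsq].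
    destruct (rep_coords_unique a b c m ha hm hgcd A B x y z w x' y' z' w' H H' Hz Hw Hz' Hw')
      as (-> & -> & -> & ->).
    reflexivity.
Qed.
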